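(* Let $d$ and $m$ be integers, $0<\epsilon\le 1$ a real number, and $0<\delta<1$. There is a non-adaptive randomized group testing algorithm that makes $O((1/\epsilon^2)\log(1/\delta))$ tests and: if $d<m$ then, with probability at least $1-\delta$, it returns $0$; if $d>(1+\epsilon)m$ then, with probability at least $1-\delta$, it returns $1$; if $m\le d\le(1+\epsilon)m$ it returns $0$ or $1$. Here $d$ is the (unknown) number of defective items.
   Context: Group testing: items $X=[n]$, unknown defective set $I\subseteq X$ with $d=|I|$. A test $Q\subseteq X$ has answer $1$ if $Q\cap I\neq\emptyset$ and $0$ otherwise. A non-adaptive (randomized) algorithm chooses all its tests before seeing any answer, then computes its output from the answers. Logarithms are base 2. *)

From HB Require Import structures.
From mathcomp Require Import all_boot all_order all_algebra.
From mathcomp Require Import reals exp.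
Set Implicit Arguments. Unset Strict Implicit. Unset Printing Implicit Defensive.
Import Order.TTheory GRing.Theory Num.Theory.
Local Open Scope ring_scope.

Definition test_answer (n : nat) (I Q : {set 'I_n}) : bool := Q :&: I != set0.

(* A non-adaptive randomized group testing algorithm on items 'I_n making
   t tests: a random seed omega is drawn from a finite sample space with
   probability weights; the t tests depend only on omega (non-adaptive),
   and the output is computed from omega and the vector of answers. *)
Record nonadaptive_alg (R : realType) (n t : nat) := NonAdaptiveAlg {
  seed : finType;
  weight : seed -> R;
  weight_ge0 : forall w, 0 <= weight w;
  weight_sum1 : \sum_(w : seed) weight w = 1;
  tests : seed -> 'I_t -> {set 'I_n};
  decide : seed -> {ffun 'I_t -> bool} -> bool }.

Definition run (R : realType) n t (A : nonadaptive_alg R n t)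
  (I : {set 'I_n}) (w : seed A) : bool :=
  decide w [ffun j => test_answer I (tests w j)].

Arguments run {R n t} A I w.

Definition prob_output (R : realType) n t (A : nonadaptive_alg R n t)
  (I : {set 'I_n}) (b : bool) : R :=
  \sum_(w : seed A | run A I w == b) weight w.

Definition log2 (R : realType) (x : R) : R := ln x / ln 2.

Arguments prob_output {R n t} A I b.

From HB Require Import structures.
From mathcomp Require Import all_boot all_order all_algebra.
From mathcomp Require Import reals sequences exp.
From mathcomp Require Import lra.
Set Implicit Arguments. Unset Strict Implicit. Unset Printing Implicit Defensive.
Import Order.TTheory GRing.Theory Num.Theory.
Local Open Scope ring_scope.

(* Put every item into a test independently with probability p = 1/(2m).  A
   test is then negative with probability (1 - p)^d, which decreases in d, is
   at least 1/2 for d < m, and is smaller by at least eps/6 once d > (1+eps)m.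
   The algorithm makes t = O(log(1/delta)/eps^2) such tests and answers 1 iff
   the fraction of negative tests is below the midpoint of that gap.  The
   number of negative tests is a sum of t independent indicators, so by the
   exponential Markov inequality and e^mu <= 1 + mu + 2 mu^2 each error
   probability is at most exp(-t (eps/12)^2 / 8) <= delta. *)

Section ProductWeight.
Variables (R : realType) (I T : finType) (w : T -> R).

Definition prodw (f : {ffun I -> T}) : R := \prod_i w (f i).

Lemma sum_prodw_prod (g : I -> T -> R) :
  \sum_f prodw f * \prod_i g i (f i) = \prod_i \sum_x w x * g i x.
Proof.
by rewrite bigA_distr_bigA /=; apply: eq_bigr => f _; rewrite /prodw -big_split.
Qed.

Hypothesis w_ge0 : forall x, 0 <= w x.
Hypothesis w_sum1 : \sum_x w x = 1.

Lemma prodw_ge0 f : 0 <= prodw f.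
Proof. exact: prodr_ge0. Qed.

Lemma prodw_sum1 : \sum_f prodw f = 1.
Proof.
transitivity (\prod_(i : I) \sum_x w x * 1).
  by rewrite -sum_prodw_prod; apply: eq_bigr => f _; rewrite big1_eq mulr1.
by apply: big1 => i _; under eq_bigr do rewrite mulr1.
Qed.

End ProductWeight.

Definition bernw (R : numDomainType) (p : R) (b : bool) : R :=
  if b then p else 1 - p.

Lemma bernw_ge0 (R : numDomainType) (p : R) :
  0 <= p <= 1 -> forall b, 0 <= bernw p b.
Proof. by case/andP=> p_ge0 p_le1 []; rewrite /= ?subr_ge0. Qed.

Lemma bernw_sum1 (R : numDomainType) (p : R) : \sum_b bernw p b = 1.
Proof. by rewrite big_bool /= addrC subrK. Qed.

Lemma expR_markov (R : realType) (T : finType) (w : T -> R) (P : pred T)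
    (S : T -> R) (a : R) :
  (forall x, 0 <= w x) -> (forall x, P x -> a <= S x) ->
  \sum_(x | P x) w x <= expR (- a) * \sum_x w x * expR (S x).
Proof.
move=> w_ge0 PS; rewrite mulr_sumr [leRHS](bigID P) /= -[leLHS]addr0.
apply: lerD; last by apply: sumr_ge0 => x _; rewrite !mulr_ge0 ?expR_ge0.
apply: ler_sum => x /PS aS; rewrite mulrCA -expRD -[leLHS]mulr1 ler_wpM2l //.
by rewrite -expR0 ler_expR addrC subr_ge0.
Qed.

Lemma expR_le_quadratic (R : realType) (x : R) :
  x <= 1 / 2 -> expR x <= 1 + x + 2 * x ^+ 2.
Proof.
move=> x_le; have ex_gt0 := expR_gt0 x.
have : (1 - x) * expR x <= 1.
  by have := expR_ge1Dx (- x); rewrite expRN -(ler_pM2r ex_gt0) mulVf ?gt_eqF.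
have : 1 <= (1 - x) * (1 + x + 2 * x ^+ 2) by nra.
nra.
Qed.

Section Chernoff.
Variables (R : realType) (T : finType) (w : T -> R) (X : pred T) (t : nat).
Hypothesis w_ge0 : forall x, 0 <= w x.
Hypothesis w_sum1 : \sum_x w x = 1.

Definition hit_mean : R := \sum_x w x * (X x)%:R.

Definition hits (f : {ffun 'I_t -> T}) : R := \sum_j (X (f j))%:R.

Lemma mgf_hits mu :
  \sum_f prodw w f * expR (mu * hits f)
  = (\sum_x w x * expR (mu * (X x)%:R)) ^+ t.
Proof.
under eq_bigr do rewrite /hits mulr_sumr expR_sum.
by rewrite (sum_prodw_prod _ (fun _ b => expR (mu * (X b)%:R))) prodr_const card_ord.
Qed.

Lemma mgf_hit_le mu : mu <= 1 / 2 ->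
  \sum_x w x * expR (mu * (X x)%:R) <= expR (mu * hit_mean + 2 * mu ^+ 2).
Proof.
move=> mu_le; apply: le_trans (expR_ge1Dx _).
have -> : 1 + (mu * hit_mean + 2 * mu ^+ 2)
    = \sum_x (w x + mu * (w x * (X x)%:R) + 2 * mu ^+ 2 * w x).
  by rewrite !big_split /= -!mulr_sumr w_sum1 mulr1 addrA.
apply: ler_sum => x _; have := w_ge0 x; have := expR_le_quadratic mu_le.
by case: (X x); rewrite /= ?mulr1 ?mulr0 ?expR0; nra.
Qed.

Lemma chernoff (P : pred {ffun 'I_t -> T}) mu a :
  mu <= 1 / 2 -> (forall f, P f -> a <= mu * hits f) ->
  \sum_(f | P f) prodw w f <= expR (t%:R * (mu * hit_mean + 2 * mu ^+ 2) - a).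
Proof.
move=> mu_le Pa; apply: le_trans (expR_markov (prodw_ge0 w_ge0) Pa) _.
rewrite mgf_hits expRD mulrC expRM_natl ler_wpM2r ?expR_ge0 //.
rewrite lerXn2r ?nnegrE ?expR_ge0 ?mgf_hit_le //.
by apply: sumr_ge0 => x _; rewrite mulr_ge0 ?expR_ge0.
Qed.

Lemma chernoff_upper c D : 0 <= D <= 1 -> hit_mean + D <= c ->
  \sum_(f | t%:R * c <= hits f) prodw w f <= expR (- (t%:R * D ^+ 2 / 8)).
Proof.
move=> /andP[D_ge0 D_le1] cD; have t_ge0 : 0 <= t%:R :> R by [].
apply: le_trans (chernoff (mu := D / 4) (a := D / 4 * (t%:R * c)) _ _) _.
- lra.
- by move=> f tc; rewrite ler_wpM2l //; lra.
have key : D / 4 * hit_mean + 2 * (D / 4) ^+ 2 - D / 4 * c <= - (D ^+ 2 / 8).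
  by nra.
rewrite ler_expR; have := ler_wpM2l t_ge0 key; lra.
Qed.

Lemma chernoff_lower c D : 0 <= D <= 1 -> c + D <= hit_mean ->
  \sum_(f | hits f < t%:R * c) prodw w f <= expR (- (t%:R * D ^+ 2 / 8)).
Proof.
move=> /andP[D_ge0 D_le1] cD; have t_ge0 : 0 <= t%:R :> R by [].
apply: le_trans (chernoff (mu := - (D / 4)) (a := - (D / 4) * (t%:R * c)) _ _) _.
- lra.
- by move=> f /ltW tc; rewrite !mulNr lerN2 ler_wpM2l //; lra.
have key : - (D / 4) * hit_mean + 2 * (- (D / 4)) ^+ 2 + D / 4 * c
    <= - (D ^+ 2 / 8).
  by nra.
rewrite ler_expR; have := ler_wpM2l t_ge0 key; lra.
Qed.

End Chernoff.

Arguments hits {R T} X {t} f.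

Definition misses n (I : {set 'I_n}) (f : {ffun 'I_n -> bool}) : bool :=
  ~~ test_answer I [set i | f i].

Lemma missesE n (I : {set 'I_n}) f : misses I f = [forall (i | i \in I), ~~ f i].
Proof.
rewrite /misses /test_answer negbK; apply/eqP/forallP => [/setP miss i | miss].
  by apply/implyP => iI; have := miss i; rewrite !inE iI andbT => ->.
by apply/setP => i; rewrite !inE; have := miss i; case: (f i); case: (i \in I).
Qed.

Lemma hit_mean_misses (R : realType) n (I : {set 'I_n}) (p : R) :
  hit_mean (prodw (bernw p)) (misses I) = (1 - p) ^+ #|I|.
Proof.
pose g i b : R := if i \in I then (~~ b)%:R else 1.
transitivity (\sum_f prodw (bernw p) f * \prod_i g i (f i)).
  have natr_and : {morph (fun b : bool => b%:R : R) : b1 b2 / b1 && b2 >-> b1 * b2}.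
    by move=> b1 b2; rewrite -mulnb natrM.
  apply: eq_bigr => f _; rewrite missesE -big_andE.
  by rewrite (big_morph _ natr_and (erefl : true%:R = 1 :> R)) big_mkcond.
rewrite sum_prodw_prod -prodr_const [RHS]big_mkcond; apply: eq_bigr => i _.
rewrite big_bool /g /=; case: (i \in I); rewrite /= ?mulr0 ?mulr1 ?add0r //.
by rewrite addrC subrK.
Qed.

Lemma prob_output_compl (R : realType) n t (A : nonadaptive_alg R n t)
    (I : {set 'I_n}) b :
  prob_output A I b = 1 - prob_output A I (~~ b).
Proof.
rewrite -(weight_sum1 A) (bigID (fun w => run A I w == b)) /=.
have -> : \sum_(w | run A I w != b) weight w = prob_output A I (~~ b).
  by apply: eq_bigl => w; case: b; case: run.
by rewrite addrK.
Qed.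

Section ThresholdAlgorithm.
Variables (R : realType) (n t : nat) (p tau : R).
Hypothesis p01 : 0 <= p <= 1.

Definition threshold_alg : nonadaptive_alg R n t :=
  NonAdaptiveAlg (prodw_ge0 (prodw_ge0 (bernw_ge0 p01)))
    (prodw_sum1 _ (prodw_sum1 _ (bernw_sum1 p)))
    (fun f j => [set i | f j i])
    (fun _ ans => \sum_j (~~ ans j)%:R < t%:R * tau).

Lemma run_threshold_alg I f :
  run threshold_alg I f = (hits (misses I) f < t%:R * tau).
Proof. by rewrite /run /hits /=; under eq_bigr do rewrite ffunE. Qed.

Lemma threshold_alg_false (I : {set 'I_n}) D :
  0 <= D <= 1 -> tau + D <= (1 - p) ^+ #|I| ->
  1 - expR (- (t%:R * D ^+ 2 / 8)) <= prob_output threshold_alg I false.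
Proof.
move=> D01 gap; rewrite prob_output_compl lerD2l lerN2 /prob_output.
under eq_bigl do rewrite eqb_id run_threshold_alg.
apply: (chernoff_lower _ (prodw_ge0 (bernw_ge0 p01)) (prodw_sum1 _ (bernw_sum1 p)) D01).
by rewrite hit_mean_misses.
Qed.

Lemma threshold_alg_true (I : {set 'I_n}) D :
  0 <= D <= 1 -> (1 - p) ^+ #|I| + D <= tau ->
  1 - expR (- (t%:R * D ^+ 2 / 8)) <= prob_output threshold_alg I true.
Proof.
move=> D01 gap; rewrite prob_output_compl lerD2l lerN2 /prob_output.
under eq_bigl do rewrite eqbF_neg run_threshold_alg -leNgt.
apply: (chernoff_upper _ (prodw_ge0 (bernw_ge0 p01)) (prodw_sum1 _ (bernw_sum1 p)) D01).
by rewrite hit_mean_misses.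
Qed.

End ThresholdAlgorithm.

Definition coin_alg (R : realType) n (a : R) (a01 : 0 <= a <= 1) :
  nonadaptive_alg R n 0 :=
  NonAdaptiveAlg (bernw_ge0 a01) (bernw_sum1 a) (fun _ _ => set0) (fun b _ => b).

Lemma prob_output_coin_alg (R : realType) n (a : R) (a01 : 0 <= a <= 1)
    (I : {set 'I_n}) b :
  prob_output (coin_alg n a01) I b = bernw a b.
Proof. by rewrite /prob_output /run /= big_pred1_eq. Qed.

Lemma bernoulli_ineq (R : realDomainType) (x : R) k :
  x <= 1 -> 1 - k%:R * x <= (1 - x) ^+ k.
Proof.
move=> x_le1; elim: k => [|k IHk]; first by rewrite mul0r subr0 expr0.
have := ler_wpM2l (_ : 0 <= 1 - x) IHk; rewrite subr_ge0 exprS -natr1 => /(_ x_le1).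
have : 0 <= k%:R * x ^+ 2 by rewrite mulr_ge0 ?sqr_ge0.
nra.
Qed.

Lemma expr1Bn_le_expR (R : realType) (x : R) k :
  x <= 1 -> (1 - x) ^+ k <= expR (- (k%:R * x)).
Proof.
move=> x_le1; rewrite -mulrN expRM_natl lerXn2r ?nnegrE ?expR_ge0 ?subr_ge0 //.
exact: expR_ge1Dx.
Qed.

Lemma mul1D_expRN_le1 (R : realType) (x : R) : (1 + x) * expR (- x) <= 1.
Proof. by rewrite expRN ler_pdivrMr ?expR_gt0 // mul1r expR_ge1Dx. Qed.

Definition inclusion_prob (R : realType) (m : nat) : R := (2 * m%:R)^-1.

Section MissRate.
Variables (R : realType) (m : nat).
Hypothesis m_gt0 : (0 < m)%N.
Local Notation p := (inclusion_prob R m).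

Lemma natr_pred : m.-1%:R = m%:R - 1 :> R.
Proof. by rewrite -[in RHS](prednK m_gt0) -natr1 addrK. Qed.

Lemma mulr_inclusion_prob : m%:R * p = 1 / 2.
Proof.
by rewrite /inclusion_prob invfM mulrCA mulfV ?pnatr_eq0 -?lt0n // mulr1 div1r.
Qed.

Lemma inclusion_prob_itv : 0 <= p <= 1.
Proof.
have m_ge1 : 1 <= m%:R :> R by rewrite ler1n.
have := mulr_inclusion_prob; rewrite /inclusion_prob invr_ge0 => mp.
apply/andP; split; first by rewrite mulr_ge0.
nra.
Qed.

Lemma miss_rate_ge_half : 1 / 2 <= (1 - p) ^+ m.-1.
Proof.
apply: le_trans (bernoulli_ineq _ _) ; last by case/andP: inclusion_prob_itv.
have := mulr_inclusion_prob; have /andP[p_ge0 _] := inclusion_prob_itv.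
by rewrite natr_pred; nra.
Qed.

Lemma miss_rate_few d : (d < m)%N -> (1 - p) ^+ m.-1 <= (1 - p) ^+ d.
Proof.
have /andP[p_ge0 p_le1] := inclusion_prob_itv.
by move=> d_lt; rewrite ler_wiXn2l ?subr_ge0 ?gerBl // -ltnS prednK.
Qed.

Lemma miss_rate_many d (eps : R) : 0 < eps <= 1 -> (1 + eps) * m%:R < d%:R ->
  (1 - p) ^+ d + eps / 6 <= (1 - p) ^+ m.-1.
Proof.
move=> /andP[eps_gt0 eps_le1] d_large.
have /andP[p_ge0 p_le1] := inclusion_prob_itv.
have mp := mulr_inclusion_prob; have a_ge := miss_rate_ge_half.
have m_le_d : (m.-1 <= d)%N.
  have : 0 <= eps * m%:R :> R by rewrite mulr_ge0 // ltW.
  by rewrite -(@ler_nat R) natr_pred; nra.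
rewrite -(subnKC m_le_d) exprD; set k := (d - m.-1)%N.
have qk : (1 - p) ^+ k <= expR (- (eps / 2)).
  apply: le_trans (expr1Bn_le_expR k p_le1) _.
  rewrite ler_expR lerN2 /k natrB // natr_pred; nra.
have qk' : (1 - p) ^+ k * (1 + eps / 2) <= 1.
  have := mul1D_expRN_le1 (eps / 2); have := expR_gt0 (- (eps / 2)); nra.
have : (1 - p) ^+ m.-1 * ((1 - p) ^+ k * (1 + eps / 2)) <= (1 - p) ^+ m.-1.
  by rewrite -[leRHS]mulr1 ler_wpM2l //; lra.
nra.
Qed.

End MissRate.

(* 1152 = 8 * 12^2: the Chernoff bound with gap eps/12 needs
   t (eps/12)^2 / 8 >= ln (1/delta). *)
Definition num_tests (R : realType) (eps delta : R) : nat :=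
  (Num.truncn (1152 * ln delta^-1 / eps ^+ 2)).+1.

Lemma num_tests_le (R : realType) (eps delta : R) :
  0 < eps <= 1 -> 0 < delta <= 1 / 2 ->
  (num_tests eps delta)%:R <= 1153 * (log2 delta^-1 / eps ^+ 2).
Proof.
move=> /andP[eps_gt0 eps_le1] /andP[delta_gt0 delta_le].
set L := ln delta^-1; set u := log2 delta^-1; set v := (eps ^+ 2)^-1.
have ln2_gt0 : 0 < ln (2 : R) by rewrite ln_gt0 ?ltr1n.
have ln2_le1 : ln (2 : R) <= 1.
  rewrite -[leRHS](expRK 1) ler_ln ?posrE ?expR_gt0 //.
  by apply: le_trans (expR_ge1Dx 1); lra.
have L_ge : ln 2 <= L.
  rewrite ler_ln ?posrE ?invr_gt0 // -(ler_pM2r delta_gt0) mulVf ?gt_eqF //; lra.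
have u_ge_L : L <= u by rewrite /u /log2 -/L ler_pdivlMr //; nra.
have u_ge1 : 1 <= u by rewrite /u /log2 -/L ler_pdivlMr // mul1r.
have v_ge1 : 1 <= v by rewrite /v invf_ge1 ?exprn_gt0 // expr_le1 // ltW.
have x_ge0 : 0 <= 1152 * L * v by rewrite !mulr_ge0 //; lra.
have /andP[trunc_le _] := truncn_itv x_ge0.
rewrite /num_tests -/L -/v -natr1; nra.
Qed.

Lemma expR_num_tests_le (R : realType) (eps delta : R) :
  0 < eps -> 0 < delta <= 1 ->
  expR (- ((num_tests eps delta)%:R * (eps / 12) ^+ 2 / 8)) <= delta.
Proof.
move=> eps_gt0 /andP[delta_gt0 delta_le1].
have L_ge0 : 0 <= ln delta^-1 by rewrite ln_ge0 // invf_ge1.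
have e2_gt0 : 0 < eps ^+ 2 by rewrite exprn_gt0.
have x_ge0 : 0 <= 1152 * ln delta^-1 / eps ^+ 2.
  by rewrite divr_ge0 ?mulr_ge0 // ltW.
have /andP[_ /ltW x_lt] := truncn_itv x_ge0.
rewrite -[leRHS](lnK delta_gt0) ler_expR -[ln delta]opprK -lnV ?posrE // lerN2.
move: x_lt; rewrite -/(num_tests eps delta) ler_pdivrMr // expr_div_n; lra.
Qed.

Theorem lemma15 (R : realType) :
  exists C : R, 0 < C /\
  forall (n m : nat) (eps delta : R),
    0 < eps <= 1 -> 0 < delta < 1 ->
    exists (t : nat) (A : nonadaptive_alg R n t),
      (t%:R <= C * (log2 (delta^-1) / eps ^+ 2)) /\
      forall I : {set 'I_n},
        ((#|I| < m)%N -> 1 - delta <= prob_output A I false) /\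
        ((1 + eps) * m%:R < #|I|%:R -> 1 - delta <= prob_output A I true).
Proof.
exists 1153; split=> // n m eps delta eps01 /andP[delta_gt0 delta_lt1].
have [eps_gt0 eps_le1] := andP eps01.
have bound_ge0 : 0 <= 1153 * (log2 delta^-1 / eps ^+ 2).
  apply: mulr_ge0 => //; apply: divr_ge0; last by rewrite exprn_ge0 // ltW.
  by apply: divr_ge0; apply: ln_ge0; rewrite ?invf_ge1 ?ler1n // ltW.
case: (posnP m) => [-> | m_gt0].
  have one01 : (0 : R) <= (1 : R) <= 1 by rewrite ler01 lexx.
  exists 0%N, (coin_alg n one01); split=> // I.
  by rewrite !prob_output_coin_alg /=; split=> //; lra.
(* For delta >= 1/2 the bound on t may be below 1, so no test can be afforded:
   a fair coin is then correct with probability 1/2 >= 1 - delta. *)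
case: (lerP (1 / 2) delta) => [delta_ge | delta_lt].
  have half01 : (0 : R) <= (1 / 2 : R) <= 1 by apply/andP; split; lra.
  exists 0%N, (coin_alg n half01); split=> // I.
  by rewrite !prob_output_coin_alg /=; split=> _; lra.
pose D := eps / 12; pose tau := (1 - inclusion_prob R m) ^+ m.-1 - D.
have D01 : 0 <= D <= 1 by apply/andP; split; rewrite /D; lra.
have delta01 : 0 < delta <= 1 by rewrite delta_gt0 ltW.
have err := expR_num_tests_le eps_gt0 delta01.
exists (num_tests eps delta), (threshold_alg n _ tau (inclusion_prob_itv R m_gt0)).
split=> [|I]; first by apply: num_tests_le => //; rewrite delta_gt0 ltW.
split=> hI.
  apply: le_trans (threshold_alg_false _ _ D01 _); first lra.
  by rewrite /tau subrK miss_rate_few.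
apply: le_trans (threshold_alg_true _ _ D01 _); first lra.
by have := miss_rate_many m_gt0 eps01 hI; rewrite /tau /D; lra.
Qed.
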